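(* Let $G$ be a graph such that $D_2(G)$ is connected. Then $\mathrm{diam}(D_2(G))\geqslant \left\lceil \tfrac{1}{2}\mathrm{diam}(G)\right\rceil$.
   Context: All graphs are finite, simple and undirected. For a graph $G$, $\mathrm{d}_G(x,y)$ denotes the length of a shortest path between $x$ and $y$, and $\mathrm{diam}(G)$ is the maximum distance between vertices of $G$. The $2$-distance graph $D_2(G)$ of $G$ is the graph with vertex set $V(G)$ in which two vertices $x,y$ are adjacent if and only if $\mathrm{d}_G(x,y)=2$. *)

From mathcomp Require Import all_boot.
Set Implicit Arguments. Unset Strict Implicit. Unset Printing Implicit Defensive.

Section Graphs.
Variable T : finType.

Definition simple_graph (e : rel T) : Prop := symmetric e /\ irreflexive e.

Fixpoint walkb (e : rel T) (n : nat) (x y : T) : bool :=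
  match n with
  | 0 => x == y
  | n'.+1 => [exists z, e x z && walkb e n' z y]
  end.

Definition dist_eq (e : rel T) (x y : T) (k : nat) : bool :=
  walkb e k x y && [forall m : 'I_k, ~~ walkb e m x y].

Definition connected (e : rel T) : Prop :=
  forall x y : T, exists n, walkb e n x y.

Definition is_diam (e : rel T) (D : nat) : Prop :=
  (exists x y, dist_eq e x y D) /\ (forall x y k, dist_eq e x y k -> k <= D).

Definition D2 (e : rel T) : rel T := fun x y => dist_eq e x y 2.

End Graphs.

(* Every edge of D_2(G) is a walk of length 2 in G, so a D_2(G)-walk of length
   n between x and y yields a G-walk of length 2n.  Taking x, y at G-distance
   diam(G), their D_2(G)-distance n satisfies diam(G) <= 2n and n <= diam(D_2(G)). *)
From mathcomp Require Import all_boot.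
Set Implicit Arguments. Unset Strict Implicit. Unset Printing Implicit Defensive.

Section Walks.
Variables (T : finType) (e : rel T).

Lemma walkb_cat m n (x y z : T) :
  walkb e m x y -> walkb e n y z -> walkb e (m + n) x z.
Proof.
elim: m x => [|m IHm] x /=; first by move/eqP->.
case/existsP=> w /andP[exw wy] yz.
by apply/existsP; exists w; rewrite exw (IHm _ wy yz).
Qed.

Lemma dist_eq_walkb (x y : T) k : dist_eq e x y k -> walkb e k x y.
Proof. by case/andP. Qed.

Lemma dist_eq_leq (x y : T) k n : dist_eq e x y k -> walkb e n x y -> k <= n.
Proof.
case/andP=> _ /forallP noshorter wn; rewrite leqNgt; apply/negP=> lt_nk.
by have := noshorter (Ordinal lt_nk); rewrite wn.
Qed.

Lemma dist_eq_exists (x y : T) n : walkb e n x y -> exists k, dist_eq e x y k.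
Proof.
move=> wn; have [k wk minimal] := @ex_minnP (fun k => walkb e k x y) (ex_intro _ n wn).
exists k; rewrite /dist_eq wk; apply/forallP=> m; apply/negP=> wm.
by have := minimal _ wm; rewrite leqNgt ltn_ord.
Qed.

Lemma walkb_D2 n (x y : T) : walkb (D2 e) n x y -> walkb e n.*2 x y.
Proof.
elim: n x => [|n IHn] x //=.
case/existsP=> w /andP[/dist_eq_walkb xw wy].
exact: walkb_cat xw (IHn _ wy).
Qed.

End Walks.

Theorem theorem2p5 (T : finType) (e : rel T) (dG dD : nat) :
  simple_graph e ->
  connected (D2 e) ->
  is_diam e dG ->
  is_diam (D2 e) dD ->
  uphalf dG <= dD.
Proof.
move=> _ connD2 [[x [y dxy]] _] [_ diamD2].
have [n wn] := connD2 x y.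
have [k dk] := dist_eq_exists wn.
apply: leq_trans (diamD2 _ _ _ dk).
rewrite leq_uphalf_double.
exact: dist_eq_leq dxy (walkb_D2 (dist_eq_walkb dk)).
Qed.
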